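(* Let $(\Omega,\mathcal{F},P)$ be a probability space with filtration $\{\mathcal{F}_t\}_{0\le t\le T}$. Let $(\delta_{st})_{0\le s\le t\le T}$ be nonnegative real numbers such that $\delta_{rs}\delta_{st}+\delta_{rs}+\delta_{st}=\delta_{rt}$ for all $r\le s\le t$. For $s\le t$ define \[\mathcal{Q}_{st}=\Big\{Q\ll P \text{ on } \mathcal{F}_t:\ Q|_{\mathcal{F}_s}=P,\ \frac{dQ}{dP}=1+g_{st}\text{ for some } g_{st}\in L^2(\mathcal{F}_t)\text{ with } E[g_{st}^2\mid\mathcal{F}_s]\le\delta_{st}^2\Big\}.\] Then: (1) for all $r\le s\le t$, $Q\in\mathcal{Q}_{rs}$ and $R\in\mathcal{Q}_{st}$, the probability measure $S\ll P$ with $\frac{dS}{dP}=\frac{dQ}{dP}\frac{dR}{dP}$ belongs to $\mathcal{Q}_{rt}$; (2) for all $A\in\mathcal{F}_s$ and $Q_1,Q_2\in\mathcal{Q}_{st}$, there exists $Q\in\mathcal{Q}_{st}$ with $\frac{dQ}{dP}=\frac{dQ_1}{dP}1_A+\frac{dQ_2}{dP}1_{A^c}$. *)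

From HB Require Import structures.
From mathcomp Require Import all_boot all_order all_algebra.
From mathcomp Require Import all_classical all_reals all_analysis.
Set Implicit Arguments. Unset Strict Implicit. Unset Printing Implicit Defensive.
Import Order.TTheory GRing.Theory Num.Theory.
Import numFieldNormedType.Exports.
Local Open Scope classical_set_scope.
Local Open Scope ring_scope.

Definition Gmeas d (T : measurableType d) (R : realType)
  (G : set (set T)) (f : T -> R) : Prop :=
  forall B : set R, measurable B -> G (f @^-1` B).

Definition is_cond_exp d (T : measurableType d) (R : realType)
  (P : probability T R) (G : set (set T)) (X Y : T -> R) : Prop :=
  [/\ Gmeas G Y, P.-integrable setT (EFin \o Y) &
      forall A, G A -> (\int[P]_(x in A) (Y x)%:E = \int[P]_(x in A) (X x)%:E)%E].

Definition is_filtration d (T : measurableType d) (R : realType)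
  (Tend : R) (F : R -> set (set T)) : Prop :=
  (forall t, 0 <= t <= Tend -> sigma_algebra setT (F t)) /\
  (forall t, 0 <= t <= Tend -> forall A, F t A -> measurable A) /\
  (forall s t, 0 <= s -> s <= t -> t <= Tend -> forall A, F s A -> F t A).

(* The set Q_{st}, each measure Q << P on F_t being represented by its
   Radon-Nikodym density D = dQ/dP (an F_t-measurable function):
   Q(A) = \int_A D dP for A in F_t. *)
Definition Qset d (T : measurableType d) (R : realType)
  (P : probability T R) (F : R -> set (set T)) (delta : R -> R -> R)
  (s t : R) (D : T -> R) : Prop :=
  [/\ Gmeas (F t) D,
      {ae P, forall x, 0 <= D x},
      (forall A, F s A -> (\int[P]_(x in A) (D x)%:E = P A)%E) &
      exists g : T -> R,
        [/\ Gmeas (F t) g,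
            P.-integrable setT (fun x => ((g x) ^+ 2)%:E),
            (forall x, D x = 1 + g x) &
            exists Y : T -> R,
              is_cond_exp P (F s) (fun x => (g x) ^+ 2) Y /\
              {ae P, forall x, Y x <= (delta s t) ^+ 2}]].

From HB Require Import structures.
From mathcomp Require Import all_boot all_order all_algebra.
From mathcomp Require Import all_classical all_reals all_analysis.
From mathcomp Require Import measurable_realfun.
From mathcomp Require Import ring lra.
Import Order.TTheory GRing.Theory Num.Theory.
Import numFieldNormedType.Exports HBNNSimple.
Set Implicit Arguments. Unset Strict Implicit.
Local Open Scope classical_set_scope.
Local Open Scope ring_scope.

(* A density [D] lies in [Q_st] iff it is [F_t]-measurable, a.e. nonnegative,
   integrates to [P A] over every [A] in [F_s], and has
   [E[D^2 1_B] <= (1 + delta_st^2) P B] for every [B] in [F_s]: writing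
   [D = 1 + g], the mean condition kills [E[g 1_B]], so
   [E[D^2 1_B] = P B + E[g^2 1_B]], and a bound on the integrals of
   [E[g^2 | F_s]] over [F_s] is an a.e. bound on it.  Pasting two densities
   along [A] in [F_s] visibly preserves these conditions.  For a product,
   conditioning on [F_s] (pulling the [F_s]-measurable factor [DQ^2] out, by
   approximation with simple functions) gives
   [E[(DQ DR)^2 1_B] <= (1 + delta_st^2) E[DQ^2 1_B]
                     <= (1 + delta_st^2) (1 + delta_rs^2) P B],
   and the composition rule for [delta] says exactly
   [1 + delta_rt = (1 + delta_rs) (1 + delta_st)], which makes the last
   constant at most [1 + delta_rt^2]. *)

Lemma Gmeas_sub d (T : measurableType d) (R : realType) (G H : set (set T))
    (f : T -> R) :
  (forall A, G A -> H A) -> Gmeas G f -> Gmeas H f.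
Proof. by move=> GH mf B mB; apply: GH; exact: mf. Qed.

Section sub_sigma_algebra.
Context d (T : measurableType d) (R : realType) (G : set (set T)).
Hypothesis sigmaG : sigma_algebra setT G.
Hypothesis measG : forall A, G A -> measurable A.

Local Notation TG := (g_sigma_algebraType G).

Lemma GmeasP (f : T -> R) : Gmeas G f <-> measurable_fun [set: TG] f.
Proof.
rewrite /Gmeas; split => [mf _ B mB|mf B mB].
  by rewrite setTI measurable_g_measurableTypeE //; exact: mf.
by have := mf measurableT B mB; rewrite setTI measurable_g_measurableTypeE.
Qed.

Lemma measurable_fun_to_g_sigma : measurable_fun [set: T] (id : T -> TG).
Proof.
move=> _ B; rewrite setTI measurable_g_measurableTypeE //; exact: measG.
Qed.

Lemma Gmeas_measurable (f : T -> R) : Gmeas G f -> measurable_fun setT f.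
Proof.
by move=> /GmeasP mf; exact: (measurableT_comp mf measurable_fun_to_g_sigma).
Qed.

Lemma Gmeas_cst (c : R) : Gmeas G (fun=> c).
Proof. exact/GmeasP/measurable_cst. Qed.

Lemma Gmeas_indic (A : set T) : G A -> Gmeas G (\1_A : T -> R).
Proof.
move=> GA; apply/GmeasP; apply: (@measurable_indic _ TG R setT A) => //.
by rewrite measurable_g_measurableTypeE.
Qed.

Lemma GmeasD (f g : T -> R) : Gmeas G f -> Gmeas G g -> Gmeas G (f \+ g).
Proof. by move=> /GmeasP mf /GmeasP mg; exact/GmeasP/measurable_funD. Qed.

Lemma GmeasM (f g : T -> R) : Gmeas G f -> Gmeas G g -> Gmeas G (f \* g).
Proof. by move=> /GmeasP mf /GmeasP mg; exact/GmeasP/measurable_funM. Qed.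

Lemma Gmeas_funrpos (f : T -> R) : Gmeas G f -> Gmeas G f^\+.
Proof. by move=> /GmeasP mf; exact/GmeasP/measurable_funrpos. Qed.

Variable mu : {measure set T -> \bar R}.

Lemma integral_nnsfun_mul (s : {nnsfun TG >-> R}) (X : T -> R) :
  measurable_fun setT X -> (forall x, 0 <= X x) ->
  (\int[mu]_x ((s x)%:E * (X x)%:E) =
   \sum_(y \in range s) (y%:E * \int[mu]_(x in s @^-1` [set y]) (X x)%:E))%E.
Proof.
move=> mX X0.
have Gs y : G (s @^-1` [set y]).
  exact: (GmeasP s).2 (measurable_funP s) _ (measurable_set1 y).
transitivity (\int[mu]_x (\sum_(y \in range s)
    ((y * \1_(s @^-1` [set y]) x)%:E * (X x)%:E)))%E.
  apply: eq_integral => x _.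
  rewrite -ge0_mule_fsuml => [|y]; last exact: nnfun_muleindic_ge0.
  by rewrite fsumEFin // -fimfunE.
rewrite ge0_integral_fsum//; last 2 first.
- move=> y; apply: emeasurable_funM; apply/measurable_EFinP => //.
  by apply: measurable_funM => //; apply: measurable_indic; exact: measG.
- move=> y x _; rewrite mule_ge0 ?lee_fin//; exact: nnfun_muleindic_ge0.
apply: eq_fsbigr => y /[!inE] -[x0 _ <-].
under eq_integral do rewrite EFinM -muleA.
rewrite ge0_integralZl//; last 3 first.
- apply: emeasurable_funM; apply/measurable_EFinP => //.
  by apply: measurable_indic; exact: measG.
- by move=> x _; rewrite mule_ge0 ?lee_fin.
- by rewrite lee_fin fun_ge0.
congr (_ * _)%E; rewrite [RHS]integral_mkcond epatch_indic.
by apply: eq_integral => x _; rewrite /= muleC.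
Qed.

(* Approximating h from below by G-simple functions reduces the claim to
   indicators of sets in G, where it is the hypothesis. *)
Lemma ge0_integral_Gmeas_mul_le (X1 X2 : T -> R) :
  measurable_fun setT X1 -> measurable_fun setT X2 ->
  (forall x, 0 <= X1 x) -> (forall x, 0 <= X2 x) ->
  (forall C, G C -> \int[mu]_(x in C) (X1 x)%:E <= \int[mu]_(x in C) (X2 x)%:E)%E ->
  forall h : T -> R, Gmeas G h -> (forall x, 0 <= h x) ->
  (\int[mu]_x ((h x)%:E * (X1 x)%:E) <= \int[mu]_x ((h x)%:E * (X2 x)%:E))%E.
Proof.
move=> mX1 mX2 X10 X20 leX h mh h0.
have mhTG : measurable_fun [set: TG] (EFin \o h) by exact/measurable_EFinP/GmeasP.
pose s := nnsfun_approx measurableT mhTG.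
have approx (X : T -> R) : measurable_fun setT X -> (forall x, 0 <= X x) ->
    (\int[mu]_x ((s n x)%:E * (X x)%:E))%E @[n --> \oo] -->
    (\int[mu]_x ((h x)%:E * (X x)%:E))%E.
  move=> mX X0.
  have -> : (\int[mu]_x ((h x)%:E * (X x)%:E) =
             \int[mu]_x limn (fun n => (s n x)%:E * (X x)%:E))%E.
    apply: eq_integral => x _; apply/esym/cvg_lim => //; apply: cvgeZr => //.
    have := @cvg_nnsfun_approx _ TG R setT measurableT (EFin \o h) mhTG.
    by move=> /(_ _ x I); apply => y _; rewrite lee_fin.
  apply: cvg_monotone_convergence => //.
  - move=> n; apply: emeasurable_funM; apply/measurable_EFinP => //.
    exact: measurableT_comp (measurable_funP (s n)) measurable_fun_to_g_sigma.
  - by move=> n x _; rewrite mule_ge0 ?lee_fin.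
  - move=> x _ a b ab; rewrite lee_wpmul2r ?lee_fin//.
    by have /lefP := nd_nnsfun_approx measurableT mhTG ab; apply.
apply: lee_cvg_to (approx _ mX1 X10) (approx _ mX2 X20) _.
apply: nearW => n; rewrite !integral_nnsfun_mul//.
apply: lee_fsum => [|_ /= [x0 _ <-]]; first exact: fimfunP.
rewrite lee_wpmul2l ?lee_fin ?fun_ge0//; apply: leX.
exact: (GmeasP (s n)).2 (measurable_funP (s n)) _ (measurable_set1 _).
Qed.

Lemma integralEindic (A : set T) (f : T -> R) :
  (\int[mu]_(x in A) (f x)%:E = \int[mu]_x (\1_A x * f x)%:E)%E.
Proof.
by rewrite integral_mkcond; apply: eq_integral => x _; rewrite epatch_indic /= muleC.
Qed.

Lemma ge0_integral_Gmeas_mul_le_cst (h X : T -> R) (c : R) : 0 <= c ->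
  Gmeas G h -> (forall x, 0 <= h x) ->
  measurable_fun setT X -> (forall x, 0 <= X x) ->
  (forall C, G C -> \int[mu]_(x in C) (X x)%:E <= c%:E * mu C)%E ->
  forall A, G A ->
  (\int[mu]_(x in A) (h x * X x)%:E <= c%:E * \int[mu]_(x in A) (h x)%:E)%E.
Proof.
move=> c0 mh h0 mX X0 leX A GA.
have mhA : Gmeas G (\1_A \* h) by apply: GmeasM => //; exact: Gmeas_indic.
have hA0 x : 0 <= \1_A x * h x by rewrite mulr_ge0 ?indicE ?ler0n.
rewrite !(integralEindic A) -ge0_integralZl//; last 2 first.
- exact/measurable_EFinP/(Gmeas_measurable mhA).
- by move=> x _; rewrite lee_fin.
under eq_integral do rewrite mulrA EFinM.
under [X in (_ <= X)%E]eq_integral do rewrite muleC.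
apply: (ge0_integral_Gmeas_mul_le mX (measurable_cst c)) => // C GC.
by apply: (le_trans (leX _ GC)); rewrite -integral_cst //; exact: measG.
Qed.

Lemma integral_Gmeas_mul_mean_one (h X : T -> R) :
  Gmeas G h -> {ae mu, forall x, 0 <= h x} ->
  measurable_fun setT X -> {ae mu, forall x, 0 <= X x} ->
  (forall C, G C -> \int[mu]_(x in C) (X x)%:E = mu C)%E ->
  forall A, G A -> (\int[mu]_(x in A) (h x * X x)%:E = \int[mu]_(x in A) (h x)%:E)%E.
Proof.
move=> mh h0 mX X0 meanX A GA.
have mA := measG GA; have mhT := Gmeas_measurable mh.
have hpos : {ae mu, forall x, h x = h^\+ x}.
  by apply: filterS h0 => x hx; rewrite /funrpos max_l.
have Xpos : {ae mu, forall x, X x = X^\+ x}.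
  by apply: filterS X0 => x Xx; rewrite /funrpos max_l.
have mhA : Gmeas G (\1_A \* h^\+).
  by apply: GmeasM; [exact: Gmeas_indic|exact: Gmeas_funrpos].
have hA0 x : 0 <= \1_A x * h^\+ x by rewrite mulr_ge0 ?indicE ?ler0n ?funrpos_ge0.
have meanXpos C : G C -> (\int[mu]_(x in C) (X^\+ x)%:E = \int[mu]_(x in C) 1%:E)%E.
  move=> GC; transitivity (mu C).
    rewrite -meanX//; apply: ae_eq_integral; [exact: measG|..].
    - exact/measurable_EFinP/measurable_funTS/measurable_funrpos.
    - exact/measurable_EFinP/measurable_funTS.
    - by apply: filterS Xpos => x -> _.
  by rewrite -[LHS]mul1e; apply/esym/integral_cst; exact: measG.
transitivity (\int[mu]_x ((\1_A x * h^\+ x)%:E * (X^\+ x)%:E))%E.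
  rewrite (integralEindic A); apply: ae_eq_integral => //.
  - apply/measurable_EFinP/measurable_funM; first exact: measurable_indic.
    exact: measurable_funM.
  - apply: emeasurable_funM; apply/measurable_EFinP;
      [exact: Gmeas_measurable mhA|exact: measurable_funrpos].
  - by apply: filterS2 hpos Xpos => x hx Xx _; rewrite -EFinM mulrA -hx -Xx.
transitivity (\int[mu]_x ((\1_A x * h^\+ x)%:E * 1%:E))%E; last first.
  rewrite (integralEindic A); apply: ae_eq_integral => //.
  - apply: emeasurable_funM; [exact/measurable_EFinP/(Gmeas_measurable mhA)|].
    exact: measurable_cst.
  - by apply/measurable_EFinP/measurable_funM => //; exact: measurable_indic.
  - by apply: filterS hpos => x hx _; rewrite mule1 -hx.
have mXp := measurable_funrpos mX.
apply/le_anti/andP; split; apply: ge0_integral_Gmeas_mul_le => // C GC;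
  by rewrite meanXpos.
Qed.

Variable P : probability T R.

(* The conditional expectation is the Radon-Nikodym derivative, on the
   measurable space (T, G), of the charge A |-> E[X 1_A] with respect to the
   restriction of P to G. *)
Lemma cond_exp_exists (X : T -> R) : measurable_fun setT X ->
  (forall x, 0 <= X x) -> P.-integrable setT (EFin \o X) ->
  exists Y, is_cond_exp P G X Y.
Proof.
move=> mX X0 iX.
pose idm : {mfun T >-> TG} :=
  HB.pack (id : T -> TG) (isMeasurableFun.Build _ _ _ _ _ measurable_fun_to_g_sigma).
pose PG : {sigma_finite_measure set TG -> \bar R} := distribution P idm.
have measTG (A : set TG) : measurable A -> measurable (A : set T).
  by rewrite measurable_g_measurableTypeE //; exact: measG.
pose nuf : set TG -> \bar R := fun A => (\int[P]_(x in A) (X x)%:E)%E.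
have nu0 : nuf set0 = 0%E by rewrite /nuf integral_set0.
have nu_fin (A : set TG) : measurable A -> nuf A \is a fin_num.
  move=> mA; apply: integrable_fin_num; first exact: measTG.
  by apply: integrableS iX => //; exact: measTG.
have nu_additive : semi_sigma_additive nuf.
  move=> A mA tA mUA; apply: semi_sigma_additive_nng_induced => //.
  - exact/measurable_EFinP.
  - by move=> n; exact: measTG.
  - exact: measTG.
pose nu : {charge set TG -> \bar R} :=
  HB.pack nuf (isCharge.Build _ _ _ nuf nu0 nu_fin nu_additive).
have nuPG : nu `<< PG.
  apply/null_content_dominatesP => A mA PA0.
  apply: null_set_integral => //; first exact: measTG.
  exact/measurable_EFinP/measurable_funTS.
have iF := Radon_Nikodym_integrable nuPG.
set Fd := Radon_Nikodym nu PG in iF.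
have mF : measurable_fun setT Fd by exact: measurable_int iF.
have iFT : P.-integrable [set: T] (Fd : T -> \bar R).
  apply/integrableP; split; first exact: measurableT_comp mF measurable_fun_to_g_sigma.
  move/integrableP : iF => [_].
  by rewrite /PG /distribution ge0_integral_pushforward//; exact: measurableT_comp.
exists (fun x : T => fine (Fd x)); split.
- by apply/GmeasP; exact: measurableT_comp (fine_measurable _) mF.
- apply: eq_integrable iFT => // x _; exact/esym/fineK/Radon_Nikodym_fin_num.
- move=> A GA; have mA : measurable (A : set TG).
    by rewrite measurable_g_measurableTypeE.
  transitivity (nu A); last by [].
  rewrite (Radon_Nikodym_integral nuPG mA) /PG /distribution integral_pushforward //.
    by apply: eq_integral => x _; rewrite /= fineK ?Radon_Nikodym_fin_num.
  by apply: integrableS iFT => //; exact: measTG.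
Qed.

Lemma Gmeas_ae_le_cst (Y : T -> R) (c : R) : Gmeas G Y ->
  P.-integrable setT (EFin \o Y) ->
  (forall B, G B -> \int[P]_(x in B) (Y x)%:E <= c%:E * P B)%E ->
  {ae P, forall x, Y x <= c}.
Proof.
move=> mY iY leY.
pose B := Y @^-1` `]c, +oo[.
have GB : G B by apply: mY; exact: measurable_itv.
have mB := measG GB.
have mYB : measurable_fun B (fun x => (Y x - c)%:E).
  exact/measurable_EFinP/measurable_funB/measurable_cst/measurable_funTS/Gmeas_measurable.
have : (\int[P]_(x in B) `|(Y x - c)%:E| = 0)%E.
  apply/eqP; rewrite eq_le integral_ge0 ?andbT; last by move=> x _; exact: abse_ge0.
  rewrite (eq_integral (fun x => (Y x)%:E - (cst c x)%:E))%E; last first.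
    move=> x; rewrite inE /B /= in_itv /= andbT => cY.
    by rewrite ger0_norm ?subr_ge0 ?(ltW cY).
  rewrite integralB_EFin //; last 2 first.
  - exact: integrableS iY.
  - exact: finite_measure_integrable_cst.
  have -> : (\int[P]_(x in B) (cst c x)%:E = c%:E * P B)%E by exact: (integral_cst P mB c%:E).
  by rewrite sube_le0; exact: leY.
move=> /(ae_eq_integral_abs P mB mYB).1.
apply: filterS => x /= Yx; rewrite leNgt; apply/negP => cY.
have Bx : B x by rewrite /B /= in_itv /= andbT.
have /eqP := Yx Bx.
by rewrite eqe subr_eq0 => /eqP Yc; move: cY; rewrite Yc ltxx.
Qed.

End sub_sigma_algebra.

Section probability_sqr.
Context d (T : measurableType d) (R : realType) (P : probability T R).

Lemma integrable_of_sqr (f : T -> R) : measurable_fun setT f ->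
  P.-integrable setT (EFin \o (fun x => f x ^+ 2)) -> P.-integrable setT (EFin \o f).
Proof.
move=> mf if2; apply: (le_integrable measurableT (g := EFin \o (fun x => 1 + f x ^+ 2))).
- exact/measurable_EFinP.
- move=> x _; rewrite lee_fin /= [leRHS]ger0_norm ?addr_ge0 ?sqr_ge0//.
  by rewrite -[f x ^+ 2]real_normK ?num_real//; have := normr_ge0 (f x); nra.
- have := integrableD measurableT (finite_measure_integrable_cst P 1 measurableT) if2.
  by apply: eq_integrable => // x _.
Qed.

Lemma integrable_sqrDr (f : T -> R) (c : R) : measurable_fun setT f ->
  P.-integrable setT (EFin \o (fun x => f x ^+ 2)) ->
  P.-integrable setT (EFin \o (fun x => (f x + c) ^+ 2)).
Proof.
move=> mf if2; apply: (le_integrable measurableT (g := EFin \o (fun x => 2 * f x ^+ 2 + 2 * c ^+ 2))).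
- exact/measurable_EFinP/measurable_funX/measurable_funD.
- move=> x _; rewrite lee_fin /= ger0_norm ?sqr_ge0// ger0_norm; last first.
    by rewrite addr_ge0// mulr_ge0// sqr_ge0.
  by have := sqr_ge0 (f x - c); nra.
- have := integrableD measurableT (integrableZl measurableT 2 if2)
    (finite_measure_integrable_cst P (2 * c ^+ 2) measurableT).
  by apply: eq_integrable => // x _.
Qed.

Lemma integral_sqr_oneD (g : T -> R) (B : set T) : measurable B ->
  measurable_fun setT g -> P.-integrable setT (EFin \o (fun x => g x ^+ 2)) ->
  (\int[P]_(x in B) (1 + g x)%:E = P B)%E ->
  (\int[P]_(x in B) ((1 + g x) ^+ 2)%:E = P B + \int[P]_(x in B) (g x ^+ 2)%:E)%E.
Proof.
move=> mB mg ig2 meang.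
have ig : P.-integrable B (EFin \o g) by exact: integrableS (integrable_of_sqr mg ig2).
have ig2B : P.-integrable B (EFin \o (fun x => g x ^+ 2)) by exact: integrableS ig2.
have i1 : P.-integrable B (EFin \o cst 1) by exact: finite_measure_integrable_cst.
have int1 : (\int[P]_(x in B) 1%:E = P B)%E.
  by rewrite -[RHS]mul1e; exact: (integral_cst P mB 1%:E).
have int_g0 : (\int[P]_(x in B) (g x)%:E = 0)%E.
  have finPB : P B \is a fin_num by rewrite fin_num_measure.
  move: meang; under eq_integral do rewrite EFinD.
  rewrite integralD_EFin // int1 => /(congr1 (fun z => (z - P B)%E)).
  by rewrite addeC addeK // subee.
have sqr_expand x : ((1 + g x) ^+ 2)%:E = 1%:E + ((2 * g x)%:E + (g x ^+ 2)%:E).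
  by rewrite -!EFinD; congr (_%:E); ring.
under eq_integral do rewrite sqr_expand.
rewrite integralD_EFin//=; last first.
  have := integrableD mB (integrableZl mB 2 ig) ig2B.
  by apply: eq_integrable => // x _; rewrite /= EFinM.
rewrite integralD_EFin//=; last first.
  by apply: eq_integrable (integrableZl mB 2 ig) => // x _; rewrite /= EFinM.
rewrite int1; congr (_ + _)%E; rewrite -[RHS]add0e; congr (_ + _)%E.
by under eq_integral do rewrite EFinM; rewrite integralZl// int_g0 mule0.
Qed.

Lemma ae_le_cst_integral (Y : T -> R) (c : R) (B : set T) : measurable B ->
  P.-integrable B (EFin \o Y) -> {ae P, forall x, Y x <= c} ->
  (\int[P]_(x in B) (Y x)%:E <= c%:E * P B)%E.
Proof.
move=> mB iY Yc.
have ic : P.-integrable B (EFin \o cst c) by exact: finite_measure_integrable_cst.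
have -> : (c%:E * P B = \int[P]_(x in B) (cst c x)%:E)%E.
  exact/esym/(integral_cst P mB c%:E).
rewrite -sube_ge0 ?integrable_fin_num// -integralB_EFin//.
have mcY : measurable_fun B (fun x => c - Y x).
  by apply: measurable_funB => //; exact/measurable_EFinP/(measurable_int P iY).
rewrite (ae_eq_integral (EFin \o (fun x => c - Y x)^\+)) //.
- by apply: integral_ge0 => x _; rewrite lee_fin funrpos_ge0.
- exact/measurable_EFinP.
- exact/measurable_EFinP/measurable_funrpos.
- by apply: filterS Yc => x Yx _; rewrite /= /funrpos max_l// subr_ge0.
Qed.

End probability_sqr.

Section Qset_characterization.
Context d (T : measurableType d) (R : realType) (P : probability T R).
Variables (F : R -> set (set T)) (delta : R -> R -> R) (s t : R).
Hypotheses (sigma_s : sigma_algebra setT (F s)) (meas_s : forall A, F s A -> measurable A).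
Hypotheses (sigma_t : sigma_algebra setT (F t)) (meas_t : forall A, F t A -> measurable A).

Lemma QsetP (D : T -> R) : Qset P F delta s t D <->
  [/\ Gmeas (F t) D, {ae P, forall x, 0 <= D x},
      (forall A, F s A -> \int[P]_(x in A) (D x)%:E = P A)%E,
      P.-integrable setT (EFin \o (fun x => D x ^+ 2)) &
      forall B, F s B ->
        (\int[P]_(x in B) (D x ^+ 2)%:E <= (1 + delta s t ^+ 2)%:E * P B)%E].
Proof.
have moment2 (g : T -> R) B : F s B -> measurable_fun setT g ->
    P.-integrable setT (EFin \o (fun x => g x ^+ 2)) ->
    (\int[P]_(x in B) (1 + g x)%:E = P B)%E ->
    (\int[P]_(x in B) ((1 + g x) ^+ 2)%:E <= (1 + delta s t ^+ 2)%:E * P B)%E =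
    (\int[P]_(x in B) (g x ^+ 2)%:E <= (delta s t ^+ 2)%:E * P B)%E.
  move=> FsB mg ig2 meang; have mB := meas_s FsB.
  have finPB : P B \is a fin_num by exact: fin_num_measure.
  rewrite integral_sqr_oneD//.
  by rewrite -(fineK finPB) -!EFinM mulrDl mul1r EFinD leeD2lE.
split.
- move=> [mD D0 meanD [g [mg ig2 Dg [Y [[_ iY intY] Yle]]]]].
  have mgT := Gmeas_measurable sigma_t meas_t mg.
  have iD2 : P.-integrable setT (EFin \o (fun x => D x ^+ 2)).
    by apply: eq_integrable (integrable_sqrDr 1 mgT ig2) => // x _; rewrite /= Dg addrC.
  split => // B FsB.
  have -> : (\int[P]_(x in B) (D x ^+ 2)%:E = \int[P]_(x in B) ((1 + g x) ^+ 2)%:E)%E.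
    by apply: eq_integral => x _; rewrite Dg.
  rewrite moment2 //; last by rewrite -meanD//; apply: eq_integral => x _; rewrite Dg.
  rewrite -intY//; apply: ae_le_cst_integral Yle; first exact: meas_s.
  by apply: integrableS iY => //; exact: meas_s.
- move=> [mD D0 meanD iD2 leD2].
  pose g x := D x - 1.
  have mg : Gmeas (F t) g by apply: GmeasD mD (Gmeas_cst _ _).
  have mgT := Gmeas_measurable sigma_t meas_t mg.
  have Dg x : D x = 1 + g x by rewrite /g addrC subrK.
  have ig2 := integrable_sqrDr (-1) (Gmeas_measurable sigma_t meas_t mD) iD2.
  have [Y ceY] := cond_exp_exists sigma_s meas_s (measurable_funX 2 mgT)
    (fun x => sqr_ge0 (g x)) ig2.
  have [mY iY intY] := ceY.
  split => //; exists g; split => //; exists Y; split => //.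
  apply: (Gmeas_ae_le_cst sigma_s meas_s mY iY) => B FsB.
  rewrite intY// -moment2//; last by rewrite -meanD//; apply: eq_integral => x _; rewrite -Dg.
  by under eq_integral do rewrite -Dg; exact: leD2.
Qed.

End Qset_characterization.

(* The hypothesis says [1 + z = (1 + x) (1 + y)]. *)
Lemma sqr_compose_le (R : realFieldType) (x y z : R) : 0 <= x -> 0 <= y ->
  x * y + x + y = z -> (1 + y ^+ 2) * (1 + x ^+ 2) <= 1 + z ^+ 2.
Proof.
move=> x0 y0 <-; have := mulr_ge0 (mulr_ge0 x0 y0) (addr_ge0 (addr_ge0 x0 y0) ler01).
by nra.
Qed.

Lemma integral_paste d (T : measurableType d) (R : realType) (mu : {measure set T -> \bar R})
    (A B : set T) (f1 f2 : T -> R) :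
  measurable A -> measurable B -> measurable_fun setT f1 -> measurable_fun setT f2 ->
  (\int[mu]_(x in B) (f1 x * \1_A x + f2 x * \1_(~` A) x)%:E =
   \int[mu]_(x in B `&` A) (f1 x)%:E + \int[mu]_(x in B `&` ~` A) (f2 x)%:E)%E.
Proof.
move=> mA mB mf1 mf2.
rewrite -[in LHS](setIT B) -(setUv A) setIUr integral_setU; last 4 first.
- exact: measurableI mB mA.
- by apply: measurableI => //; exact: measurableC.
- apply/measurable_EFinP/measurable_funTS/measurable_funD;
    by apply: measurable_funM => //; apply: measurable_indic => //; exact: measurableC.
- by apply/disj_setPLR => x [_ Ax] [_].
congr (_ + _)%E; apply: eq_integral => x /[!inE] -[_ Ax].
  by rewrite indicE mem_set// indicE in_setC mem_set// mulr1 mulr0 addr0.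
by rewrite indicE memNset// indicE in_setC memNset// mulr1 mulr0 add0r.
Qed.

Lemma integrable_mulr_indic d (T : measurableType d) (R : realType)
    (mu : {measure set T -> \bar R}) (A : set T) (f : T -> R) :
  measurable A -> mu.-integrable setT (EFin \o f) ->
  mu.-integrable setT (EFin \o (fun x => f x * \1_A x)).
Proof.
move=> mA /[dup] /(measurable_int mu) /measurable_EFinP mf if_.
apply: le_integrable if_ => //.
- by apply/measurable_EFinP/measurable_funM => //; exact: measurable_indic.
- move=> x _; rewrite lee_fin /= normrM indicE.
  by case: (x \in A); rewrite ?normr1 ?mulr1 ?normr0 ?mulr0.
Qed.

Section sigma_algebra_closure.
Context d (T : measurableType d) (G : set (set T)).
Hypothesis sigmaG : sigma_algebra setT G.

Lemma sigma_algebraT : G setT.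
Proof. by case: sigmaG => G0 GC _; rewrite -(setD0 setT); exact: GC. Qed.

Lemma sigma_algebraC (A : set T) : G A -> G (~` A).
Proof. by case: sigmaG => _ GC _; rewrite -setTD; exact: GC. Qed.

Lemma sigma_algebraI (A B : set T) : G A -> G B -> G (A `&` B).
Proof.
rewrite -(measurable_g_measurableTypeE sigmaG) => mA mB.
exact: (@measurableI _ (g_sigma_algebraType G)).
Qed.

End sigma_algebra_closure.

Section Qset_mul.
Context d (T : measurableType d) (R : realType) (P : probability T R).
Variables (F : R -> set (set T)) (delta : R -> R -> R) (r s t : R).
Hypotheses (sigma_r : sigma_algebra setT (F r)) (meas_r : forall A, F r A -> measurable A).
Hypotheses (sigma_s : sigma_algebra setT (F s)) (meas_s : forall A, F s A -> measurable A).
Hypotheses (sigma_t : sigma_algebra setT (F t)) (meas_t : forall A, F t A -> measurable A).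
Hypotheses (Frs : forall A, F r A -> F s A) (Fst : forall A, F s A -> F t A).
Hypotheses (delta_rs0 : 0 <= delta r s) (delta_st0 : 0 <= delta s t).
Hypothesis delta_rst : delta r s * delta s t + delta r s + delta s t = delta r t.

Lemma Qset_mul (DQ DR : T -> R) : Qset P F delta r s DQ -> Qset P F delta s t DR ->
  Qset P F delta r t (DQ \* DR).
Proof.
move=> /(QsetP _ _ sigma_r meas_r sigma_s meas_s) [mQ Q0 meanQ _ leQ2].
move=> /(QsetP _ _ sigma_s meas_s sigma_t meas_t) [mR R0 meanR _ leR2].
have mRT := Gmeas_measurable sigma_t meas_t mR.
have mD2 : measurable_fun setT (fun x => (DQ x * DR x) ^+ 2).
  exact/measurable_funX/measurable_funM/mRT/(Gmeas_measurable sigma_s meas_s mQ).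
have leD2 B : F r B -> (\int[P]_(x in B) ((DQ x * DR x) ^+ 2)%:E <=
    ((1 + delta s t ^+ 2) * (1 + delta r s ^+ 2))%:E * P B)%E.
  move=> FrB; under eq_integral do rewrite exprMn.
  have mQ2 : Gmeas (F s) (fun x => DQ x ^+ 2).
    by apply/(GmeasP sigma_s)/measurable_funX/(GmeasP sigma_s).
  apply: le_trans (ge0_integral_Gmeas_mul_le_cst sigma_s meas_s _ mQ2
    (fun x => sqr_ge0 _) (measurable_funX 2 mRT) (fun x => sqr_ge0 _) leR2 (Frs FrB)) _.
    by rewrite addr_ge0// sqr_ge0.
  rewrite EFinM -muleA lee_wpmul2l ?lee_fin ?addr_ge0 ?sqr_ge0//; exact: leQ2.
apply/(QsetP _ _ sigma_r meas_r sigma_t meas_t); split.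
- by apply: GmeasM => //; exact: Gmeas_sub Fst mQ.
- by apply: filterS2 Q0 R0 => x; exact: mulr_ge0.
- move=> A FrA; rewrite (integral_Gmeas_mul_mean_one sigma_s meas_s mQ Q0 mRT R0 meanR (Frs FrA)).
  exact: meanQ.
- apply/integrableP; split; first exact/measurable_EFinP.
  under eq_integral do rewrite /= ger0_norm ?sqr_ge0//.
  apply: le_lt_trans (leD2 _ (sigma_algebraT sigma_r)) _.
  by rewrite -(fineK (fin_num_measure P _ measurableT)) -EFinM ltry.
- move=> B FrB; apply: le_trans (leD2 B FrB) _.
  rewrite lee_wpmul2r ?measure_ge0// lee_fin; exact: sqr_compose_le.
Qed.

End Qset_mul.

Section Qset_paste.
Context d (T : measurableType d) (R : realType) (P : probability T R).
Variables (F : R -> set (set T)) (delta : R -> R -> R) (s t : R).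
Hypotheses (sigma_s : sigma_algebra setT (F s)) (meas_s : forall A, F s A -> measurable A).
Hypotheses (sigma_t : sigma_algebra setT (F t)) (meas_t : forall A, F t A -> measurable A).
Hypothesis Fst : forall A, F s A -> F t A.

Lemma Qset_paste (A : set T) (D1 D2 : T -> R) : F s A ->
  Qset P F delta s t D1 -> Qset P F delta s t D2 ->
  Qset P F delta s t (fun x => D1 x * \1_A x + D2 x * \1_(~` A) x).
Proof.
move=> FsA.
move=> /(QsetP _ _ sigma_s meas_s sigma_t meas_t) [m1 ge0_1 mean1 i1 le1].
move=> /(QsetP _ _ sigma_s meas_s sigma_t meas_t) [m2 ge0_2 mean2 i2 le2].
have FsAc := sigma_algebraC sigma_s FsA.
have mA := meas_s FsA.
have m1T := Gmeas_measurable sigma_t meas_t m1.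
have m2T := Gmeas_measurable sigma_t meas_t m2.
have sqr_paste x : (D1 x * \1_A x + D2 x * \1_(~` A) x) ^+ 2 =
    D1 x ^+ 2 * \1_A x + D2 x ^+ 2 * \1_(~` A) x.
  by rewrite !indicE in_setC; case: (x \in A) => /=; ring.
have measP B : measurable B -> P B = (P (B `&` A) + P (B `&` ~` A))%E.
  by move=> mB; rewrite addeC -setDE -measureDI.
apply/(QsetP _ _ sigma_s meas_s sigma_t meas_t); split.
- apply: (@GmeasD _ _ _ _ sigma_t (D1 \* \1_A) (D2 \* \1_(~` A)));
    by apply: GmeasM => //; apply: Gmeas_indic => //; exact: Fst.
- by apply: filterS2 ge0_1 ge0_2 => x h1 h2; rewrite addr_ge0// mulr_ge0// indicE ler0n.
- move=> B FsB; have mB := meas_s FsB.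
  rewrite integral_paste// (mean1 _ (sigma_algebraI sigma_s FsB FsA))
    (mean2 _ (sigma_algebraI sigma_s FsB FsAc)).
  exact/esym/measP.
- have := integrableD measurableT (integrable_mulr_indic mA i1)
    (integrable_mulr_indic (measurableC mA) i2).
  by apply: eq_integrable => // x _; rewrite /= sqr_paste.
- move=> B FsB; have mB := meas_s FsB.
  under eq_integral do rewrite sqr_paste.
  rewrite integral_paste//; [|exact: measurable_funX..].
  rewrite measP// muleDr ?fin_num_adde_defr ?fin_num_measure//; last exact: measurableI.
  by apply: leeD; [apply: le1|apply: le2]; exact: (sigma_algebraI sigma_s).
Qed.

End Qset_paste.

Theorem lemma6p6 (d : measure_display) (T : measurableType d) (R : realType)
  (P : probability T R) (Tend : R) (F : R -> set (set T))
  (delta : R -> R -> R)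
  (hF : is_filtration Tend F)
  (hdelta0 : forall s t, 0 <= s -> s <= t -> t <= Tend -> 0 <= delta s t)
  (hdelta : forall r s t, 0 <= r -> r <= s -> s <= t -> t <= Tend ->
     delta r s * delta s t + delta r s + delta s t = delta r t) :
  (forall r s t, 0 <= r -> r <= s -> s <= t -> t <= Tend ->
     forall DQ DR : T -> R,
       Qset P F delta r s DQ -> Qset P F delta s t DR ->
       Qset P F delta r t (fun x => DQ x * DR x)) /\
  (forall s t, 0 <= s -> s <= t -> t <= Tend ->
     forall (A : set T), F s A ->
     forall DQ1 DQ2 : T -> R,
       Qset P F delta s t DQ1 -> Qset P F delta s t DQ2 ->
       Qset P F delta s t (fun x => DQ1 x * \1_A x + DQ2 x * \1_(~` A) x)).
Proof.
case: hF => sigmaF [measF incF].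
have inT u : 0 <= u -> u <= Tend -> 0 <= u <= Tend by move=> -> ->.
split=> [r s t r0 rs st tT DQ DR|s t s0 st tT A FsA DQ1 DQ2].
- have s0 := le_trans r0 rs; have sT := le_trans st tT; have rT := le_trans rs sT.
  have t0 := le_trans s0 st.
  apply: (Qset_mul (sigmaF r (inT r r0 rT)) (measF r (inT r r0 rT))
    (sigmaF s (inT s s0 sT)) (measF s (inT s s0 sT))
    (sigmaF t (inT t t0 tT)) (measF t (inT t t0 tT))
    (incF r s r0 rs sT) (incF s t s0 st tT)
    (hdelta0 r s r0 rs sT) (hdelta0 s t s0 st tT) (hdelta r s t r0 rs st tT)).
- have t0 := le_trans s0 st; have sT := le_trans st tT.
  exact: (Qset_paste (sigmaF s (inT s s0 sT)) (measF s (inT s s0 sT))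
    (sigmaF t (inT t t0 tT)) (measF t (inT t t0 tT)) (incF s t s0 st tT) FsA).
Qed.
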